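(* Let $\alpha\in\mathbb{F}_q^*$ and let $g(x)=\sum_{i=0}^ka_ix^i\in\mathbb{F}_q[x;\theta]$, with $a_k=1$ and $k\ge1$, be a right divisor of $x^n-\alpha$. Let $T_g$ be the $k\times k$ companion matrix of $g$, i.e. $(T_g)_{i,i+1}=1$ for $1\le i\le k-1$, the last row of $T_g$ is $(-a_0,-a_1,\dots,-a_{k-1})$, and all other entries are $0$. Let $P=(1,0,\dots,0)\in\mathbb{F}_q^k$ and $\tau=\Theta\circ T_g$. Then a linear code $\mathscr{C}\subseteq\mathbb{F}_q^n$ is the skew $\alpha$-cyclic $[n,n-k]$-code with generator polynomial $g(x)$ if and only if $\mathscr{C}$ is the code with parity check matrix $$[\,{}^tP,\ {}^t(P\tau),\ {}^t(P\tau^2),\ \dots,\ {}^t(P\tau^{n-1})\,].$$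
   Context: Let $\mathbb{F}_q$ be a finite field, $\theta$ a field automorphism of $\mathbb{F}_q$, and $\mathbb{F}_q[x;\theta]$ the skew polynomial ring with $xa=\theta(a)x$. A linear code $\mathscr{C}\subseteq\mathbb{F}_q^n$ is skew $\alpha$-cyclic if it is invariant under $(c_0,\dots,c_{n-1})\mapsto(\alpha\theta(c_{n-1}),\theta(c_0),\dots,\theta(c_{n-2}))$. Identifying $(a_0,\dots,a_{n-1})$ with the class of $\sum a_ix^i$ in the left module $\mathbb{F}_q[x;\theta]/\mathbb{F}_q[x;\theta](x^n-\alpha)$, the skew $\alpha$-cyclic code with generator polynomial $g$ (a monic right divisor of $x^n-\alpha$) is the left submodule generated by $g$; it has dimension $n-\deg g$. Vectors are row vectors, ${}^tv$ denotes the transpose, and $P\tau:=\Theta(P)T_g$ where $\Theta$ applies $\theta$ coordinatewise; $\tau^i$ is the $i$-fold iterate. The code with parity check matrix $H$ is $\{\vec c:\vec c\,{}^tH=0\}$. *)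

From HB Require Import structures.
From mathcomp Require Import all_boot all_order all_algebra.
Set Implicit Arguments. Unset Strict Implicit. Unset Printing Implicit Defensive.
Import GRing.Theory.
Local Open Scope ring_scope.

(* Skew polynomials over F with x a = theta(a) x, represented by their
   coefficient sequences (stored in {poly F}, used only as a coefficient
   container; the ring structure of {poly F} is NOT used for products). *)

Definition skew_mul (F : fieldType) (theta : F -> F) (f g : {poly F}) : {poly F} :=
  \sum_(i < size f) \sum_(j < size g)
     (f`_i * iter i theta g`_j) *: 'X^(i + j).

Definition skew_rdvd (F : fieldType) (theta : F -> F) (g h : {poly F}) : Prop :=
  exists q : {poly F}, h = skew_mul theta q g.

Definition poly_of_row (F : fieldType) (n : nat) (c : 'rV[F]_n) : {poly F} :=
  \sum_(i < n) c 0 i *: 'X^i.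

(* Membership in the skew alpha-cyclic code with generator polynomial g:
   the class of c in F[x;theta]/F[x;theta](x^n - alpha) lies in the left
   submodule generated by the class of g. *)
Definition in_skew_code (F : fieldType) (theta : F -> F) (n : nat) (alpha : F)
  (g : {poly F}) (c : 'rV[F]_n) : Prop :=
  exists f h : {poly F},
    poly_of_row c = skew_mul theta f g + skew_mul theta h ('X^n - alpha%:P).

Definition companion (F : fieldType) (k : nat) (g : {poly F}) : 'M[F]_k :=
  \matrix_(i < k, j < k)
     if (i : nat) == k.-1 then - g`_j else ((i.+1 == j)%N)%:R.

Definition Pvec (F : fieldType) (k : nat) : 'rV[F]_k :=
  \row_(j < k) ((j : nat) == 0%N)%:R.

Definition tau (F : fieldType) (theta : F -> F) (k : nat) (g : {poly F})
  (v : 'rV[F]_k) : 'rV[F]_k :=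
  map_mx theta v *m companion k g.

Definition parity_mx (F : fieldType) (theta : F -> F) (n k : nat) (g : {poly F})
  : 'M[F]_(k, n) :=
  \matrix_(r < k, i < n) (iter i (tau theta g) (@Pvec F k)) 0 r.

From HB Require Import structures.
From mathcomp Require Import all_boot all_order all_algebra zify.
Import GRing.Theory.
Local Open Scope ring_scope.
Set Implicit Arguments. Unset Strict Implicit. Unset Printing Implicit Defensive.

(* The syndrome of p = sum_i p_i x^i is s(p) = sum_i p_i P tau^i, so that
   c H^T = s(c(x)).  Since tau is theta-semilinear and P tau^i is the i-th
   unit vector for i < k, s turns left multiplication by x into tau, maps a
   polynomial of degree < k to its coefficient vector, and kills g (the last
   row of T_g encodes x^k = -a_0 - ... - a_(k-1) modulo g).  Thus the kernel
   of s is a left ideal containing g, hence containing F[x;theta] g and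
   F[x;theta](x^n - alpha); conversely right division by the monic g leaves a
   remainder of degree < k, which must vanish when its syndrome does. *)

Section LinearCombination.

Variables (F : fieldType) (V : lmodType F) (w : nat -> V).

Definition lincomb (p : {poly F}) : V := \sum_(i < size p) p`_i *: w i.

Lemma lincomb_widen N (p : {poly F}) :
  (size p <= N)%N -> lincomb p = \sum_(i < N) p`_i *: w i.
Proof.
move=> hN; rewrite /lincomb (big_ord_widen _ (fun i => p`_i *: w i) hN) big_mkcond.
by apply: eq_bigr => i _; case: ltnP => // hi; rewrite nth_default ?scale0r.
Qed.

Lemma lincomb_is_linear : linear lincomb.
Proof.
move=> a p q; set N := maxn (size p) (size q).
have hp : (size p <= N)%N := leq_maxl _ _.
have hq : (size q <= N)%N := leq_maxr _ _.
have hpq : (size (a *: p + q)%R <= N)%N.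
  rewrite (leq_trans (size_polyD _ _)) // geq_max hq andbT.
  exact: leq_trans (size_scale_leq _ _) hp.
rewrite !(@lincomb_widen N) // scaler_sumr -big_split.
by apply: eq_bigr => i _; rewrite coefD coefZ scalerDl scalerA.
Qed.

HB.instance Definition _ :=
  GRing.isLinear.Build F {poly F} V *:%R lincomb lincomb_is_linear.

Lemma lincombZXn a m : lincomb (a *: 'X^m) = a *: w m.
Proof.
rewrite linearZ /= (@lincomb_widen m.+1) ?size_polyXn // big_ord_recr /=.
rewrite coefXn eqxx scale1r big1 ?add0r // => i _.
by rewrite coefXn (ltn_eqF (ltn_ord i)) scale0r.
Qed.

End LinearCombination.

Section SkewMultiplication.

Variables (F : fieldType) (theta : {rmorphism F -> F}).

Lemma skew_mul_widen N (f g : {poly F}) : (size f <= N)%N ->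
  skew_mul theta f g =
  \sum_(i < N) \sum_(j < size g) (f`_i * iter i theta g`_j) *: 'X^(i + j).
Proof.
move=> hN; rewrite /skew_mul.
pose G i := \sum_(j < size g) (f`_i * iter i theta g`_j) *: 'X^(i + j).
rewrite (big_ord_widen _ G hN) big_mkcond; apply: eq_bigr => i _; rewrite /G.
case: ltnP => // hi; rewrite nth_default // big1 // => j _.
by rewrite mul0r scale0r.
Qed.

Lemma skew_mul0l (g : {poly F}) : skew_mul theta 0 g = 0.
Proof. by rewrite /skew_mul size_poly0 big_ord0. Qed.

Lemma skew_mulDl (f1 f2 g : {poly F}) :
  skew_mul theta (f1 + f2) g = skew_mul theta f1 g + skew_mul theta f2 g.
Proof.
set N := maxn (size f1) (size f2).
have h1 : (size f1 <= N)%N := leq_maxl _ _.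
have h2 : (size f2 <= N)%N := leq_maxr _ _.
have h12 : (size (f1 + f2)%R <= N)%N := size_polyD _ _.
rewrite !(@skew_mul_widen N) // -big_split; apply: eq_bigr => i _; rewrite -big_split.
by apply: eq_bigr => j _; rewrite coefD mulrDl scalerDl.
Qed.

Lemma skew_mulZXnl b d (g : {poly F}) :
  skew_mul theta (b *: 'X^d) g = 'X^d * \poly_(j < size g) (b * iter d theta g`_j).
Proof.
rewrite (@skew_mul_widen d.+1) ?(leq_trans (size_scale_leq _ _)) ?size_polyXn //.
rewrite big_ord_recr /= big1 ?add0r => [|i _]; last first.
  by rewrite big1 // => j _; rewrite coefZ coefXn (ltn_eqF (ltn_ord i)) mulr0 mul0r scale0r.
rewrite poly_def mulr_sumr; apply: eq_bigr => j _.
by rewrite coefZ coefXn eqxx mulr1 exprD scalerAr.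
Qed.

Lemma iter_rmorph1 d : iter d theta 1 = 1.
Proof. by elim: d => //= d ->; rewrite rmorph1. Qed.

(* Right division: each step cancels the leading term of p by (b x^d) g,
   whose leading coefficient is b theta^d(1) = b. *)
Lemma skew_rdiv_monic (g : {poly F}) : g \is monic ->
  forall p : {poly F}, exists f : {poly F},
    (size (p - skew_mul theta f g)%R < size g)%N.
Proof.
move=> mon_g; have sg_gt0 : (0 < size g)%N by rewrite size_poly_gt0 monic_neq0.
have lead_g : g`_(size g).-1 = 1 by move/monicP: mon_g.
move=> p; elim: {p}(size p) {-2}p (leqnn (size p)) => [|m IHm] p hp.
  by exists 0; rewrite skew_mul0l subr0 (leq_ltn_trans hp).
have [small_p|big_p] := ltnP (size p) (size g).
  by exists 0; rewrite skew_mul0l subr0.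
have [|m_lt_sp] := leqP (size p) m; first exact: IHm.
have sp_eq : size p = m.+1 by apply/eqP; rewrite eqn_leq hp.
set d := (m - (size g).-1)%N; set b := p`_m.
have hdec : (size (p - skew_mul theta (b *: 'X^d) g)%R <= m)%N.
  apply/leq_sizeP => j hj; rewrite coefB skew_mulZXnl coefXnM.
  have -> : (j < d)%N = false by apply/negbTE; rewrite -leqNgt /d; lia.
  rewrite coef_poly; case: (ltngtP j m) hj => // [hjm _|->].
    rewrite nth_default ?sp_eq //.
    have -> : (j - d < size g)%N = false by apply/negbTE; rewrite -leqNgt /d; lia.
    by rewrite subrr.
  have -> : (m - d = (size g).-1)%N by rewrite /d; lia.
  by rewrite ltn_predL sg_gt0 lead_g iter_rmorph1 mulr1 subrr.
have [f hf] := IHm _ hdec.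
by exists (b *: 'X^d + f); rewrite skew_mulDl opprD addrA.
Qed.

End SkewMultiplication.

Section SemilinearOrbit.

Variables (F : fieldType) (theta : {rmorphism F -> F}) (V : lmodType F).
Variables (sigma : V -> V) (v : V).
Hypothesis sigmaD : {morph sigma : u1 u2 / u1 + u2}.
Hypothesis sigmaZ : forall a u, sigma (a *: u) = theta a *: sigma u.

Let orbit i := iter i sigma v.

Lemma semilinear0 : sigma 0 = 0.
Proof. by rewrite -(scale0r 0) sigmaZ rmorph0 !scale0r. Qed.

Lemma iter_semilinear_sum i (I : Type) (r : seq I) (a : I -> F) (u : I -> V) :
  iter i sigma (\sum_(j <- r) a j *: u j) =
  \sum_(j <- r) iter i theta (a j) *: iter i sigma (u j).
Proof.
elim: i => [|i IHi] //=; rewrite IHi (big_morph _ sigmaD semilinear0).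
by apply: eq_bigr => j _; rewrite sigmaZ.
Qed.

Lemma lincomb_orbit_skew_mul (h p : {poly F}) :
  lincomb orbit (skew_mul theta h p) =
  \sum_(i < size h) h`_i *: iter i sigma (lincomb orbit p).
Proof.
rewrite /skew_mul linear_sum; apply: eq_bigr => i _.
rewrite linear_sum [lincomb orbit p]/lincomb iter_semilinear_sum scaler_sumr.
by apply: eq_bigr => j _; rewrite /= lincombZXn scalerA /orbit iterD.
Qed.

Lemma lincomb_orbit_skew_mul_eq0 (h p : {poly F}) :
  lincomb orbit p = 0 -> lincomb orbit (skew_mul theta h p) = 0.
Proof.
move=> p0; rewrite lincomb_orbit_skew_mul p0 big1 // => i _.
by rewrite iter_fix ?semilinear0 // scaler0.
Qed.

End SemilinearOrbit.

Section CompanionOrbit.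

Variables (F : fieldType) (theta : {rmorphism F -> F}) (k : nat) (g : {poly F}).

Let orbit i := iter i (tau theta g) (@Pvec F k).

Lemma tauD : {morph @tau F theta k g : u v / u + v}.
Proof. by move=> u v; rewrite /tau map_mxD mulmxDl. Qed.

Lemma tauZ a (u : 'rV[F]_k) : tau theta g (a *: u) = theta a *: tau theta g u.
Proof. by rewrite /tau map_mxZ scalemxAl. Qed.

Lemma tau_orbit_lt j (hj : (j < k)%N) : orbit j = delta_mx 0 (Ordinal hj).
Proof.
elim: j hj => [|j IHj] hj; first by apply/rowP => c; rewrite !mxE.
rewrite /orbit iterS -/(orbit j) (IHj (ltnW hj)) /tau map_delta_mx -rowE.
have j_last : (j == k.-1) = false by apply/negbTE/eqP; lia.
by apply/rowP => c; rewrite !mxE /= j_last eq_sym.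
Qed.

Lemma tau_orbit_size : (0 < k)%N -> orbit k = - \row_(c < k) g`_c.
Proof.
move=> k_gt0; have k1_lt : (k.-1 < k)%N by rewrite ltn_predL.
have -> : orbit k = orbit k.-1.+1 by rewrite prednK.
rewrite /orbit iterS -/(orbit k.-1) (tau_orbit_lt k1_lt).
rewrite /tau map_delta_mx -rowE.
by apply/rowP => c; rewrite !mxE /= eqxx.
Qed.

Lemma lincomb_tau_orbit_small (p : {poly F}) :
  (size p <= k)%N -> lincomb orbit p = \row_(c < k) p`_c.
Proof.
move=> hp; rewrite (lincomb_widen orbit hp) [RHS]row_sum_delta.
by apply: eq_bigr => i _; rewrite mxE (tau_orbit_lt (ltn_ord i)).
Qed.

Lemma lincomb_tau_orbit_small_eq0 (p : {poly F}) :
  (size p <= k)%N -> lincomb orbit p = 0 -> p = 0.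
Proof.
move=> hp; rewrite lincomb_tau_orbit_small // => /rowP p0.
apply/polyP => i; rewrite coef0; have [i_lt_k | k_le_i] := ltnP i k.
  by have := p0 (Ordinal i_lt_k); rewrite !mxE.
by rewrite nth_default // (leq_trans hp).
Qed.

Lemma lincomb_tau_orbit_monic :
  (0 < k)%N -> size g = k.+1 -> g \is monic -> lincomb orbit g = 0.
Proof.
move=> k_gt0 sg mon_g; have lead_g : g`_k = 1 by move/monicP: mon_g; rewrite /lead_coef sg.
have low_g : (size (\poly_(i < k) g`_i)%R <= k)%N by exact: size_poly.
rewrite (lincomb_widen orbit (eq_leq sg)) big_ord_recr /= tau_orbit_size // lead_g scale1r.
have <- : lincomb orbit (\poly_(i < k) g`_i) = \sum_(i < k) g`_i *: orbit i.
  by rewrite (lincomb_widen orbit low_g); apply: eq_bigr => i _; rewrite coef_poly ltn_ord.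
rewrite lincomb_tau_orbit_small //; apply/rowP => c.
by rewrite !mxE coef_poly ltn_ord subrr.
Qed.

Lemma mulmx_parity_mx n (c : 'rV[F]_n) :
  c *m (parity_mx theta n k g)^T = lincomb orbit (poly_of_row c).
Proof.
rewrite /poly_of_row linear_sum; apply/rowP => r; rewrite !mxE summxE.
by apply: eq_bigr => i _; rewrite /= lincombZXn !mxE.
Qed.

End CompanionOrbit.

Lemma skew_code_parity_check (F : fieldType) (theta : {rmorphism F -> F})
    (n k : nat) (alpha : F) (g : {poly F}) :
  (0 < k)%N -> size g = k.+1 -> g \is monic ->
  skew_rdvd theta g ('X^n - alpha%:P) ->
  forall c : 'rV[F]_n,
    in_skew_code theta alpha g c <-> c *m (parity_mx theta n k g)^T = 0.
Proof.
move=> k_gt0 sg mon_g [q def_xn] c; rewrite mulmx_parity_mx.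
set w := fun i => _.
have g_in_ker : lincomb w g = 0 by apply: lincomb_tau_orbit_monic.
have ker_left_ideal h p : lincomb w p = 0 -> lincomb w (skew_mul theta h p) = 0.
  exact/lincomb_orbit_skew_mul_eq0/tauZ/tauD.
split=> [[f [h ->]] | c_in_ker].
  by rewrite linearD /= !ker_left_ideal ?addr0 // def_xn ker_left_ideal.
have [f] := skew_rdiv_monic theta mon_g (poly_of_row c); rewrite sg ltnS => small_r.
have /lincomb_tau_orbit_small_eq0 : lincomb w (poly_of_row c - skew_mul theta f g) = 0.
  by rewrite linearB /= c_in_ker ker_left_ideal // subr0.
move/(_ small_r)/eqP; rewrite subr_eq0 => /eqP c_eq.
by exists f, 0; rewrite c_eq skew_mul0l addr0.
Qed.

Theorem mainTheorem6 (F : finFieldType) (theta : {rmorphism F -> F})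
  (Htheta : bijective theta) (n k : nat) (alpha : F) (g : {poly F}) :
  alpha != 0 ->
  (0 < k)%N ->
  size g = k.+1 ->
  g \is monic ->
  skew_rdvd theta g ('X^n - alpha%:P) ->
  forall C : {vspace 'rV[F]_n},
    (forall c : 'rV[F]_n, c \in C <-> @in_skew_code F theta n alpha g c) <->
    (forall c : 'rV[F]_n, c \in C <-> c *m (@parity_mx F theta n k g)^T = 0).
Proof.
move=> _ k_gt0 sg mon_g g_dvd C.
have code_eq := skew_code_parity_check k_gt0 sg mon_g g_dvd.
by split=> C_eq c; rewrite C_eq code_eq.
Qed.
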